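(* Let $G_n$ be the $n\times n$ honeycomb lattice embedded in a torus, and consider the set $\Omega$ of configurations of the 1-2 model on $G_n$, i.e. edge subsets $X$ such that every vertex is incident to exactly one or exactly two edges of $X$. Then any two elements of $\Omega$ can be connected by a finite sequence of elements of $\Omega$ in which consecutive elements differ by adding or deleting a single edge. Consequently the Markov chain on $\Omega$ that moves from $X$ to each such neighbour with positive probability (and stays put otherwise), as used for Glauber dynamics of the 1-2 model with signature $(0,c,b,a,a,b,c,0)$, $a,b,c>0$, is irreducible.
   Context: The 1-2 model is the vertex model on the honeycomb lattice whose signature at every vertex is $(0,c,b,a,a,b,c,0)$, indexed by the local configurations $000,001,\dots,111$ of the incident $(a,b,c)$-edges, with $a,b,c>0$; so the allowed configurations are exactly those with one or two edges present at each vertex. *)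

From HB Require Import structures.
From mathcomp Require Import all_boot all_order all_algebra.
Set Implicit Arguments. Unset Strict Implicit. Unset Printing Implicit Defensive.
Import Order.TTheory GRing.Theory Num.Theory.

(* Vertices: (i, j, true) = black vertex at (i,j), (i, j, false) = white vertex,
   i, j taken mod n.
   Edges: (i, j, t) with t : 'I_3; edge (i,j,t) joins the black vertex (i,j) to
   the white vertex (i,j) if t = 0 (a-edge), (i-1,j) if t = 1 (b-edge),
   (i,j-1) if t = 2 (c-edge), indices mod n.  Edges are indexed explicitly,
   so for tiny n parallel edges are kept distinct (multigraph). *)
Definition hvert (n : nat) : finType := ('I_n * 'I_n * bool)%type.
Definition hedge (n : nat) : finType := ('I_n * 'I_n * 'I_3)%type.

Definition white_end (n : nat) (e : hedge n) : nat * nat :=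
  let: (i, j, t) := e in
  if nat_of_ord t == 0%N then (nat_of_ord i, nat_of_ord j)
  else if nat_of_ord t == 1%N then (((i + n).-1 %% n)%N, nat_of_ord j)
  else (nat_of_ord i, ((j + n).-1 %% n)%N).

Definition incident (n : nat) (v : hvert n) (e : hedge n) : bool :=
  let: (vi, vj, black) := v in
  let: (i, j, t) := e in
  if black then (vi == i) && (vj == j)
  else (nat_of_ord vi, nat_of_ord vj) == white_end e.

Definition degX (n : nat) (X : {set hedge n}) (v : hvert n) : nat :=
  #|[set e in X | incident v e]|.

Definition one_two_config (n : nat) (X : {set hedge n}) : bool :=
  [forall v : hvert n, (degX X v == 1%N) || (degX X v == 2%N)].

Definition single_flip (n : nat) (X Y : {set hedge n}) : bool :=
  #|(X :\: Y) :|: (Y :\: X)| == 1%N.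

Definition omega_step (n : nat) : rel {set hedge n} :=
  fun X Y => [&& one_two_config X, one_two_config Y & single_flip X Y].

From HB Require Import structures.
From mathcomp Require Import all_boot all_order all_algebra zify.
Import Order.TTheory GRing.Theory Num.Theory.

(* Every configuration is joined to the perfect matching [a_edges] of all a-edges.
   Between two configurations X \subset Z one can add the edges of Z one at a time
   without leaving Omega, so X is joined to [a_edges] through [X :|: a_edges] as soon
   as no vertex is a-blocked, i.e. misses its a-edge while carrying its b- and c-edges.
   A blocked vertex v is unblocked by deleting its t-edge (t = b or c) when the
   t-neighbour p of v has degree 2, and otherwise by first adding the a-edge at p,
   unless the a-neighbour of p is blocked too.  If no blocked vertex can be unblocked,
   u |-> a-neighbour of the t-neighbour of u permutes the blocked vertices for t = b
   and for t = c; pulling v back along both maps shows that the a-neighbour of v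
   carries its b- and c-edges, although it must have degree 1. *)

Set Implicit Arguments. Unset Strict Implicit. Unset Printing Implicit Defensive.

Definition ta : 'I_3 := @Ordinal 3 0 isT.
Definition tb : 'I_3 := @Ordinal 3 1 isT.
Definition tc : 'I_3 := @Ordinal 3 2 isT.

Section Honeycomb.
Variable n : nat.
Implicit Types (X Y Z : {set hedge n}) (u v w : hvert n) (e : hedge n) (t : 'I_3).

Definition shift t (p : 'I_n * 'I_n) : 'I_n * 'I_n :=
  if val t == 1 then (ordS p.1, p.2) else if val t == 2 then (p.1, ordS p.2) else p.

Definition unshift t (p : 'I_n * 'I_n) : 'I_n * 'I_n :=
  if val t == 1 then (ord_pred p.1, p.2) else if val t == 2 then (p.1, ord_pred p.2) else p.

Lemma shiftK t : cancel (shift t) (unshift t).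
Proof. by case: t => [[|[|[|k]]] ?] [i j]; rewrite /shift /unshift //= ordSK. Qed.

Lemma unshiftK t : cancel (unshift t) (shift t).
Proof. by case: t => [[|[|[|k]]] ?] [i j]; rewrite /shift /unshift //= ord_predK. Qed.

(* The t-edge at a white vertex p carries the label of the black vertex [shift t p]. *)
Definition edge_at v t : hedge n := (if v.2 then v.1 else shift t v.1, t).

Definition nbr v t : hvert n := (if v.2 then unshift t v.1 else shift t v.1, ~~ v.2).

Lemma edge_at_type v t : (edge_at v t).2 = t.
Proof. by []. Qed.

Lemma edge_at_inj v : injective (edge_at v).
Proof. by move=> s t /(congr1 snd). Qed.

Lemma nbrK t : involutive (nbr^~ t).
Proof. by case=> p [] /=; rewrite /nbr /= ?shiftK ?unshiftK. Qed.

Lemma edge_at_nbr v t : edge_at (nbr v t) t = edge_at v t.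
Proof. by case: v => p []; rewrite /edge_at /nbr /= ?unshiftK. Qed.

Lemma edge_at_eq u v t : (edge_at u t == edge_at v t) = (u == v) || (u == nbr v t).
Proof.
case: u v => [p []] [q []];
  rewrite /edge_at /nbr !xpair_eqE /= eqxx ?andbT ?andbF ?orbF //.
- by rewrite -(can_eq (unshiftK t)) shiftK.
- by rewrite (can_eq (shiftK t)).
Qed.

Lemma white_endE e : white_end e = (val (unshift e.2 e.1).1, val (unshift e.2 e.1).2).
Proof. by case: e => [[i j] [[|[|[|k]]] ?]]. Qed.

Lemma incidentE v e : incident v e = (e == edge_at v e.2).
Proof.
case: v => [[vi vj] []]; case: e => [[i j] t]; rewrite /incident ?white_endE /edge_at /=.
  by rewrite !xpair_eqE eqxx andbT [(i == vi)]eq_sym [(j == vj)]eq_sym.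
rewrite [RHS]xpair_eqE eqxx andbT -(can_eq (unshiftK t)) shiftK eq_sym.
by case: (unshift t (i, j)) => a b; rewrite !xpair_eqE.
Qed.

Lemma incident_edge_at u v t : incident u (edge_at v t) = (u == v) || (u == nbr v t).
Proof. by rewrite incidentE edge_at_type eq_sym edge_at_eq. Qed.

Lemma ends_edge_at u v t : incident u (edge_at v t) -> u = v \/ u = nbr v t.
Proof. by rewrite incident_edge_at => /orP[]/eqP; [left | right]. Qed.

Lemma nbr_neq v t : nbr v t != v.
Proof. by case: v => p b; rewrite /nbr xpair_eqE; case: b; rewrite andbF. Qed.

Lemma ord3P t : [\/ t = ta, t = tb | t = tc].
Proof.
by case: t => [[|[|[|k]]] ?] //;
  [constructor 1 | constructor 2 | constructor 3]; apply: val_inj.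
Qed.

Lemma degX_edges X v :
  degX X v = ((edge_at v ta \in X) + (edge_at v tb \in X) + (edge_at v tc \in X))%N.
Proof.
rewrite /degX.
have -> : [set e in X | incident v e] = edge_at v @: [set t | edge_at v t \in X].
  apply/setP => e; rewrite !inE incidentE; apply/andP/imsetP => [[eX /eqP ev]|[t]].
    by exists e.2; rewrite ?inE -ev.
  by rewrite inE => tX ->; rewrite edge_at_type eqxx.
rewrite card_imset; last exact: edge_at_inj.
rewrite -sum1_card big_mkcond !big_ord_recl big_ord0 !inE /= addn0 addnA.
by congr (_ + _ + _)%N; congr (if edge_at v _ \in X then _ else _); apply: val_inj.
Qed.

Lemma degX_ge2 X v s t :
  s != t -> edge_at v s \in X -> edge_at v t \in X -> 1 < degX X v.
Proof.
move=> st sX tX; rewrite /degX.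
have sub : [set edge_at v s; edge_at v t] \subset [set e in X | incident v e].
  by apply/subsetP => e; rewrite !inE => /orP[]/eqP->; rewrite incidentE eqxx andbT.
by apply: leq_trans (subset_leq_card sub); rewrite cards2 (inj_eq (@edge_at_inj v)) st.
Qed.

Lemma degX_eq X Y v :
  (forall e, incident v e -> (e \in X) = (e \in Y)) -> degX X v = degX Y v.
Proof.
move=> XY; apply: eq_card => e; rewrite !inE.
by case: (boolP (incident v e)) => [/XY->|_]; rewrite ?andbF.
Qed.

Lemma degX_subset X Y v : X \subset Y -> degX X v <= degX Y v.
Proof.
move=> XY; apply: subset_leq_card; apply/subsetP => e.
by rewrite !inE => /andP[/(subsetP XY)-> ->].
Qed.

Lemma degX_split X e v : degX X v = (degX (X :\ e) v + ((e \in X) && incident v e))%N.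
Proof.
rewrite /degX (cardsD1 e) inE addnC; congr (_ + _)%N.
by apply: eq_card => f; rewrite !inE andbA.
Qed.

Lemma degX_setD1 X e v : e \in X -> degX X v = (degX (X :\ e) v + incident v e)%N.
Proof. by move=> eX; rewrite (degX_split X e) eX. Qed.

Lemma degX_setU1 X e v : e \notin X -> degX (e |: X) v = (degX X v + incident v e)%N.
Proof. by move=> eX; rewrite (degX_split _ e) setU11 setU1K. Qed.

Lemma one_two_configP X : reflect (forall v, 0 < degX X v <= 2) (one_two_config X).
Proof. by apply: (iffP forallP) => H v; move: (H v); case: (degX X v) => [|[|[|k]]]. Qed.

Lemma config_setD1 X e :
  one_two_config X -> e \in X -> (forall v, incident v e -> degX X v = 2) ->
  one_two_config (X :\ e).
Proof.
move=> /one_two_configP HX eX full; apply/one_two_configP => v.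
move: (HX v) (full v); rewrite (degX_setD1 v eX).
by case: (incident v e) => /=; [move=> ? /(_ isT) | rewrite addn0 => ? _]; lia.
Qed.

Lemma config_setU1 X e :
  one_two_config X -> e \notin X -> (forall v, incident v e -> degX X v = 1) ->
  one_two_config (e |: X).
Proof.
move=> /one_two_configP HX eX free; apply/one_two_configP => v.
move: (HX v) (free v); rewrite (degX_setU1 v eX).
by case: (incident v e) => /=; [move=> ? /(_ isT) | rewrite addn0 => ? _]; lia.
Qed.

Lemma config_between X Y Z :
  one_two_config X -> one_two_config Z -> X \subset Y -> Y \subset Z -> one_two_config Y.
Proof.
move=> /one_two_configP HX /one_two_configP HZ XY YZ; apply/one_two_configP => v.
by move: (HX v) (HZ v) (degX_subset v XY) (degX_subset v YZ); lia.
Qed.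

Lemma single_flip_sym X Y : single_flip X Y = single_flip Y X.
Proof. by rewrite /single_flip setUC. Qed.

Lemma single_flip_setD1 X e : e \in X -> single_flip X (X :\ e).
Proof.
move=> eX; rewrite /single_flip.
have -> : (X :\: (X :\ e)) :|: ((X :\ e) :\: X) = [set e].
  apply/setP => f; rewrite !inE.
  by case: (eqVneq f e) => [->|] /=; [rewrite eX | case: (f \in X)].
by rewrite cards1.
Qed.

Lemma single_flip_setU1 X e : e \notin X -> single_flip X (e |: X).
Proof.
by move=> eX; rewrite single_flip_sym -{2}(setU1K eX) single_flip_setD1 ?setU11.
Qed.

Lemma omega_step_sym : symmetric (@omega_step n).
Proof. by move=> X Y; rewrite /omega_step single_flip_sym andbCA. Qed.

Lemma connect_subset X Z :
  one_two_config X -> one_two_config Z -> X \subset Z -> connect (@omega_step n) X Z.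
Proof.
move=> HX HZ; move Hk: #|Z :\: X| => k; elim: k X HX Hk => [|k IH] X HX Hk XZ.
  suff -> : X = Z by exact: connect0.
  by apply/eqP; rewrite eqEsubset XZ -setD_eq0 -cards_eq0 Hk.
have [e] : exists e, e \in Z :\: X by apply/set0Pn; rewrite -card_gt0 Hk.
rewrite inE => /andP[eX eZ].
have eXZ : e |: X \subset Z by rewrite subUset sub1set eZ.
have HeX : one_two_config (e |: X) by apply: config_between HX HZ (subsetUr _ _) eXZ.
apply: (connect_trans (y := e |: X)).
  by apply: connect1; rewrite /omega_step HX HeX single_flip_setU1.
apply: IH => //; move: Hk; rewrite (cardsD1 e) inE eX eZ add1n => -[<-].
by apply: eq_card => f; rewrite !inE negb_or andbA.
Qed.

Definition a_edges : {set hedge n} := [set e | e.2 == ta].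

Lemma config_a_edges : one_two_config a_edges.
Proof. by apply/one_two_configP => v; rewrite degX_edges !inE. Qed.

Definition a_blocked X v := (edge_at v ta \notin X) && (degX X v == 2).

Lemma a_blocked_edge X v t : a_blocked X v -> t != ta -> edge_at v t \in X.
Proof.
rewrite /a_blocked degX_edges => /andP[/negbTE-> deg2].
by case: (ord3P t) => -> //; move: deg2;
  case: (edge_at v tb \in X); case: (edge_at v tc \in X).
Qed.

Lemma a_blocked_setD1 X e u :
  one_two_config X -> e.2 != ta -> a_blocked (X :\ e) u -> a_blocked X u.
Proof.
move=> /one_two_configP HX ea /andP[au /eqP du].
have ne : edge_at u ta != e by apply: contraNneq ea => <-.
rewrite /a_blocked; move: au (HX u); rewrite in_setD1 ne (degX_split X e u) du /=.
by move=> ->; case: (_ && _).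
Qed.

Lemma a_blocked_setU1 X e u : e.2 = ta -> a_blocked (e |: X) u -> a_blocked X u.
Proof.
move=> ea /andP[]; rewrite in_setU1 negb_or => /andP[ne au] /eqP du.
rewrite /a_blocked au -du; apply/eqP/degX_eq => f; rewrite incidentE in_setU1 => /eqP fu.
by case: (eqVneq f e) => // fe; move: ne; rewrite -ea -fe -fu eqxx.
Qed.

Lemma connect_a_edges_unblocked X :
  one_two_config X -> (forall v, ~~ a_blocked X v) -> connect (@omega_step n) X a_edges.
Proof.
move=> HX free.
have HXa : one_two_config (X :|: a_edges).
  apply/one_two_configP => v; move/one_two_configP: HX => /(_ v).
  move: (free v); rewrite /a_blocked !degX_edges !inE /=.
  by case: (edge_at v ta \in X); case: (edge_at v tb \in X); case: (edge_at v tc \in X).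
apply: (connect_trans (y := X :|: a_edges)); first exact: connect_subset (subsetUl _ _).
rewrite (sym_connect_sym omega_step_sym).
exact: connect_subset config_a_edges HXa (subsetUr _ _).
Qed.

Definition nblocked X := #|[set v | a_blocked X v]|.

Definition improvable X :=
  [exists Y, [&& one_two_config Y, connect (@omega_step n) X Y & nblocked Y < nblocked X]].

Lemma improvable_via X Y v :
  one_two_config Y -> connect (@omega_step n) X Y ->
  a_blocked X v -> ~~ a_blocked Y v -> (forall u, a_blocked Y u -> a_blocked X u) ->
  improvable X.
Proof.
move=> HY XY bXv bYv YX; apply/existsP; exists Y; rewrite HY XY /=.
apply: proper_card; apply/properP; split; last by exists v; rewrite !inE.
by apply/subsetP => u; rewrite !inE => /YX.
Qed.

Section Escape.
Variables (X : {set hedge n}) (v : hvert n) (t : 'I_3).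
Hypotheses (HX : one_two_config X) (bv : a_blocked X v) (tta : t != ta).

Let p := nbr v t.
Let e := edge_at v t.

Let eX : e \in X. Proof. exact: a_blocked_edge bv tta. Qed.
Let ep : edge_at p t = e. Proof. exact: edge_at_nbr. Qed.
Let dv : degX X v = 2. Proof. by case/andP: bv => _ /eqP. Qed.

Lemma improvable_delete : degX X p = 2 -> improvable X.
Proof.
move=> dp; set Y := X :\ e.
have HY : one_two_config Y by apply: config_setD1 => // u /ends_edge_at[]->.
apply: (improvable_via (Y := Y) (v := v)) => //.
- by apply: connect1; rewrite /omega_step HX HY single_flip_setD1.
- move: dv; rewrite (degX_setD1 v eX) incident_edge_at eqxx addn1.
  by move=> -[d1]; rewrite /a_blocked d1 andbF.
- by move=> u; apply: a_blocked_setD1.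
Qed.

Lemma improvable_add_delete :
  degX X p = 1 -> ~~ a_blocked X (nbr p ta) -> improvable X.
Proof.
move=> dp rfree; set r := nbr p ta; set a := edge_at p ta.
have aX : a \notin X.
  apply/negP => aX; have tat : ta != t by rewrite eq_sym.
  by have := degX_ge2 tat aX; rewrite ep dp => /(_ eX).
have ar : edge_at r ta = a by exact: edge_at_nbr.
have dr : degX X r = 1.
  move: rfree (one_two_configP _ HX r); rewrite /a_blocked ar aX /=.
  by case: (degX X r) => [|[|[|k]]].
set X1 := a |: X.
have HX1 : one_two_config X1 by apply: config_setU1 => // u /ends_edge_at[]->.
have va : incident v a = false.
  rewrite incident_edge_at eq_sym (negbTE (nbr_neq v t)) /=.
  by apply: contraNF rfree => /eqP <-.
have eX1 : e \in X1 by rewrite setU1r.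
have dv1 : degX X1 v = 2 by rewrite degX_setU1 // va addn0.
set X2 := X1 :\ e.
have HX2 : one_two_config X2.
  apply: config_setD1 => // u /ends_edge_at[]-> //.
  by rewrite degX_setU1 // dp incident_edge_at eqxx.
apply: (improvable_via (Y := X2) (v := v)) => //.
- apply: (connect_trans (y := X1)); apply: connect1.
    by rewrite /omega_step HX HX1 single_flip_setU1.
  by rewrite /omega_step HX1 HX2 single_flip_setD1.
- move: dv1; rewrite (degX_setD1 v eX1).
  by rewrite incident_edge_at eqxx addn1 => -[d1]; rewrite /a_blocked d1 andbF.
- by move=> u /a_blocked_setD1 - /(_ HX1 tta) /a_blocked_setU1; apply.
Qed.

Lemma unimprovable_blocked_nbr :
  ~~ improvable X -> degX X p = 1 /\ a_blocked X (nbr p ta).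
Proof.
move=> stuck; have dp : degX X p = 1.
  move: (one_two_configP _ HX p); case: (eqVneq (degX X p) 2) => [/improvable_delete|].
    by rewrite (negbTE stuck).
  by case: (degX X p) => [|[|[|k]]].
split=> //; apply: contraNT stuck; exact: improvable_add_delete.
Qed.

End Escape.

Lemma blocked_improvable X v : one_two_config X -> a_blocked X v -> improvable X.
Proof.
move=> HX bv; apply: contraT => stuck.
have hop_onto t : t != ta -> exists2 u, a_blocked X u & v = nbr (nbr u t) ta.
  move=> tta; set B := [set u | a_blocked X u]; pose hop u := nbr (nbr u t) ta.
  have hop_inj : injective hop by move=> x y /(can_inj (nbrK ta))/(can_inj (nbrK t)).
  have hopB : hop @: B \subset B.
    apply/subsetP => w /imsetP[u]; rewrite inE => bu ->; rewrite inE.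
    by case: (unimprovable_blocked_nbr HX bu tta stuck).
  have /eqP hopBE : hop @: B == B by rewrite eqEcard hopB (card_imset _ hop_inj) leqnn.
  have : v \in hop @: B by rewrite hopBE inE.
  by case/imsetP => u; rewrite inE => bu ->; exists u.
have [u1 bu1 v1] := hop_onto tb isT.
have [u2 bu2 v2] := hop_onto tc isT.
have w1 : nbr v ta = nbr u1 tb by rewrite v1 nbrK.
have w2 : nbr v ta = nbr u2 tc by rewrite v2 nbrK.
have [deg1 _] := unimprovable_blocked_nbr HX bu1 (isT : tb != ta) stuck.
have := @degX_ge2 X (nbr v ta) tb tc isT.
rewrite {1}w1 {1}w2 !edge_at_nbr (a_blocked_edge bu1) // (a_blocked_edge bu2) //.
by rewrite w1 deg1 => /(_ isT isT).
Qed.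

Lemma connect_a_edges X : one_two_config X -> connect (@omega_step n) X a_edges.
Proof.
have [m] := ubnP (nblocked X); elim: m X => // m IH X ltm HX.
case: (boolP [exists v, a_blocked X v]) => [/existsP[v bv] | unblocked].
  have /existsP[Y /and3P[HY XY ltY]] := blocked_improvable HX bv.
  by apply: connect_trans XY (IH Y (leq_trans ltY ltm) HY).
apply: connect_a_edges_unblocked => // v.
by apply: contra unblocked => bv; apply/existsP; exists v.
Qed.

Lemma connect_configs X Y :
  one_two_config X -> one_two_config Y -> connect (@omega_step n) X Y.
Proof.
move=> HX HY; apply: connect_trans (connect_a_edges HX) _.
by rewrite (sym_connect_sym omega_step_sym); exact: connect_a_edges.
Qed.

End Honeycomb.

Local Open Scope ring_scope.

Theorem proposition7p1 (n : nat) :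
  (forall X Y : {set hedge n}, one_two_config X -> one_two_config Y ->
     exists s : seq {set hedge n},
       path (@omega_step n) X s && (last X s == Y))
  /\
  (forall (R : realFieldType) (P : {set hedge n} -> {set hedge n} -> R),
     (forall X Y, one_two_config X -> one_two_config Y -> 0 <= P X Y) ->
     (forall X, one_two_config X ->
        \sum_(Y : {set hedge n} | one_two_config Y) P X Y = 1) ->
     (forall X Y, omega_step X Y -> 0 < P X Y) ->
     forall X Y : {set hedge n}, one_two_config X -> one_two_config Y ->
       exists s : seq {set hedge n},
         path (fun A B => one_two_config A && one_two_config B && (0 < P A B)) X s
         && (last X s == Y)).
Proof.
split=> [X Y HX HY | R P _ _ Ppos X Y HX HY];
  have /connectP[s Xs ->] := connect_configs HX HY; exists s; rewrite eqxx andbT //.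
by apply: sub_path Xs => A B AB; move: (AB) => /and3P[-> -> _]; rewrite Ppos.
Qed.
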